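(* Suppose Assumptions A and B hold and let $(\hat x,\hat t)\in\mathcal D_{\mathrm{SDP}}$. If $\mathcal F(\hat x)$ is a definite face of $\Gamma$, then $(\hat x,\hat t)\in\mathcal D$.
   Context: Fix integers $N\ge 1$, $m_I,m_E\ge 0$, $m:=m_I+m_E\ge 1$; $[a,b]=\{a,\dots,b\}$, $[n]=[1,n]$. For $i\in[0,m]$ let $q_i(x)=x^\top A_ix+2b_i^\top x+c_i$ with $A_i\in\mathbb S^N$, $b_i\in\mathbb R^N$, $c_i\in\mathbb R$. The epigraph of the QCQP is $\mathcal D:=\{(x,t)\in\mathbb R^N\times\mathbb R: q_0(x)\le 2t,\ q_i(x)\le0\ \forall i\in[m_I],\ q_i(x)=0\ \forall i\in[m_I+1,m]\}$. Let $Q_i=\begin{pmatrix}c_i& b_i^\top\\ b_i& A_i\end{pmatrix}$ and $\mathcal D_{\mathrm{SDP}}:=\{(x,t):\exists X\in\mathbb S^N$ with $Y=\begin{pmatrix}1&x^\top\\ x& X\end{pmatrix}\succeq0$, $\langle Q_0,Y\rangle\le 2t$, $\langle Q_i,Y\rangle\le 0\ \forall i\in[m_I]$, $\langle Q_i,Y\rangle= 0\ \forall i\in[m_I+1,m]\}$ (trace inner product). For $\gamma\in\mathbb R^m$, $A(\gamma)=A_0+\sum_{i=1}^m\gamma_iA_i$, $q(\gamma,x)=q_0(x)+\sum_{i=1}^m\gamma_iq_i(x)$, and $\Gamma:=\{\gamma\in\mathbb R^m: A(\gamma)\succeq 0,\ \gamma_i\ge 0\ \forall i\in[m_I]\}$.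 Assumption A: the QCQP feasible set $\{x: q_i(x)\le 0\ \forall i\in[m_I],\ q_i(x)=0\ \forall i\in[m_I+1,m]\}$ is nonempty and there is $\gamma^*$ with $\gamma^*_i\ge0$ for $i\in[m_I]$ and $A(\gamma^* )\succ 0$. Assumption B: for every $\hat x\in\mathbb R^N$, if $\sup_{\gamma\in\Gamma}q(\gamma,\hat x)$ is finite then it is attained on $\Gamma$. For such $\hat x$, $\mathcal F(\hat x):=\arg\max_{\gamma\in\Gamma}q(\gamma,\hat x)$, a nonempty face of $\Gamma$ (for $(\hat x,\hat t)\in\mathcal D_{\mathrm{SDP}}$ the supremum is finite). A nonempty face $\mathcal F$ of $\Gamma$ is definite if some $\gamma\in\mathcal F$ has $A(\gamma)\succ0$, and semidefinite otherwise. *)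

(* the QCQP data live over an arbitrary real closed field R
   (the paper's case is R = the real numbers). *)
From HB Require Import structures.
From mathcomp Require Import all_boot all_order all_algebra.
Set Implicit Arguments. Unset Strict Implicit. Unset Printing Implicit Defensive.
Import Order.TTheory GRing.Theory Num.Theory.
Local Open Scope ring_scope.

Section QCQP.
Variable R : rcfType.

Definition symmx n (M : 'M[R]_n) : Prop := M^T = M.

Definition psdmx n (M : 'M[R]_n) : Prop :=
  symmx M /\ forall v : 'cV[R]_n, 0 <= (v^T *m M *m v) 0 0.
Definition pdmx n (M : 'M[R]_n) : Prop :=
  symmx M /\ forall v : 'cV[R]_n, v != 0 -> 0 < (v^T *m M *m v) 0 0.

(* trace inner product <P,Y> = tr(P^T Y) *)
Definition tip n (P Y : 'M[R]_n) : R := \sum_(i < n) \sum_(j < n) P i j * Y i j.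

Definition qf N (A : 'M[R]_N) (b : 'cV[R]_N) (c : R) (x : 'cV[R]_N) : R :=
  (x^T *m A *m x) 0 0 + 2 * (b^T *m x) 0 0 + c.

Definition Qmx N (A : 'M[R]_N) (b : 'cV[R]_N) (c : R) : 'M[R]_(1 + N) :=
  block_mx c%:M b^T b A.
Definition Ymx N (x : 'cV[R]_N) (X : 'M[R]_N) : 'M[R]_(1 + N) :=
  block_mx 1%:M x^T x X.

Variables (N mI mE : nat).
Variables (A0 : 'M[R]_N) (b0 : 'cV[R]_N) (c0 : R).
Variables (A : 'I_(mI + mE) -> 'M[R]_N) (b : 'I_(mI + mE) -> 'cV[R]_N)
          (c : 'I_(mI + mE) -> R).

(* constraint i is an inequality iff i < mI (i.e. i+1 in [1,mI] in the paper) *)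
Definition qcqp_feasible (x : 'cV[R]_N) : Prop :=
  forall i : 'I_(mI + mE),
    if (i < mI)%N then qf (A i) (b i) (c i) x <= 0 else qf (A i) (b i) (c i) x == 0.

Definition inD (x : 'cV[R]_N) (t : R) : Prop :=
  qf A0 b0 c0 x <= 2 * t /\ qcqp_feasible x.

Definition inDSDP (x : 'cV[R]_N) (t : R) : Prop :=
  exists X : 'M[R]_N, symmx X /\
    let Y := Ymx x X in
    psdmx Y /\ tip (Qmx A0 b0 c0) Y <= 2 * t /\
    forall i : 'I_(mI + mE),
      if (i < mI)%N then tip (Qmx (A i) (b i) (c i)) Y <= 0
      else tip (Qmx (A i) (b i) (c i)) Y == 0.

Definition Agam (g : 'I_(mI + mE) -> R) : 'M[R]_N :=
  A0 + \sum_(i < mI + mE) g i *: A i.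
Definition qgam (g : 'I_(mI + mE) -> R) (x : 'cV[R]_N) : R :=
  qf A0 b0 c0 x + \sum_(i < mI + mE) g i * qf (A i) (b i) (c i) x.
Definition inGamma (g : 'I_(mI + mE) -> R) : Prop :=
  psdmx (Agam g) /\ forall i : 'I_(mI + mE), (i < mI)%N -> 0 <= g i.

Definition assumptionA : Prop :=
  (exists x, qcqp_feasible x) /\
  exists g, (forall i : 'I_(mI + mE), (i < mI)%N -> 0 <= g i) /\ pdmx (Agam g).

Definition assumptionB : Prop :=
  forall x : 'cV[R]_N,
    (exists M : R, forall g, inGamma g -> qgam g x <= M) ->
    exists2 g, inGamma g & forall g', inGamma g' -> qgam g' x <= qgam g x.

Definition inF (x : 'cV[R]_N) (g : 'I_(mI + mE) -> R) : Prop :=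
  inGamma g /\ forall g', inGamma g' -> qgam g' x <= qgam g x.

Definition definite_F (x : 'cV[R]_N) : Prop :=
  exists g, inF x g /\ pdmx (Agam g).

End QCQP.

From HB Require Import structures.
From mathcomp Require Import all_boot all_order all_algebra.
From mathcomp Require Import ring lra.
Import Order.TTheory GRing.Theory Num.Theory.
Local Open Scope ring_scope.
Set Implicit Arguments. Unset Strict Implicit.

(* Weak duality: for gamma in Gamma and an SDP point (x, t) lifted by X,
   q(gamma, x) + <A(gamma), X - x x^T> <= 2 t, and the inner product of the
   positive semidefinite matrices A(gamma) and X - x x^T is nonnegative
   (symmetric Gaussian elimination writes the latter as a sum of rank-one
   matrices u u^T). If gamma maximizes q(., x) over Gamma and A(gamma) is
   positive definite, then gamma can be moved a little along every coordinate
   without leaving Gamma; first-order optimality gives q_i(x) <= 0, equality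
   for equality constraints and complementary slackness gamma_i q_i(x) = 0.
   Hence q_0(x) = q(gamma, x) <= 2 t and x is feasible. *)

Section BilinearForms.
Variable R : rcfType.
Implicit Types (n : nat).

Definition bform n (M : 'M[R]_n) (u v : 'cV[R]_n) : R := (u^T *m M *m v) 0 0.

Lemma dotmxC n (u v : 'cV[R]_n) : (u^T *m v) 0 0 = (v^T *m u) 0 0.
Proof. by rewrite -[in LHS](trmxK (u^T *m v)) mxE trmx_mul trmxK. Qed.

Lemma bformC n (M : 'M[R]_n) u v : symmx M -> bform M u v = bform M v u.
Proof.
move=> hM; rewrite /bform -[in LHS](trmxK (u^T *m M *m v)) mxE.
by rewrite !trmx_mul trmxK hM mulmxA.
Qed.

Lemma bformDl n (M : 'M[R]_n) u1 u2 v :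
  bform M (u1 + u2) v = bform M u1 v + bform M u2 v.
Proof. by rewrite /bform raddfD /= !mulmxDl mxE. Qed.

Lemma bformDr n (M : 'M[R]_n) u v1 v2 :
  bform M u (v1 + v2) = bform M u v1 + bform M u v2.
Proof. by rewrite /bform !mulmxDr mxE. Qed.

Lemma bformZl n (M : 'M[R]_n) k u v : bform M (k *: u) v = k * bform M u v.
Proof. by rewrite /bform linearZ /= -!scalemxAl mxE. Qed.

Lemma bformZr n (M : 'M[R]_n) k u v : bform M u (k *: v) = k * bform M u v.
Proof. by rewrite /bform -!scalemxAr mxE. Qed.

Lemma bformDm n (M1 M2 : 'M[R]_n) u v :
  bform (M1 + M2) u v = bform M1 u v + bform M2 u v.
Proof. by rewrite /bform mulmxDr mulmxDl mxE. Qed.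

Lemma bformZm n k (M : 'M[R]_n) u v : bform (k *: M) u v = k * bform M u v.
Proof. by rewrite /bform -scalemxAr -scalemxAl mxE. Qed.

Lemma bformE n (M : 'M[R]_n) u v :
  bform M u v = \sum_i \sum_j u i 0 * M i j * v j 0.
Proof.
rewrite /bform mxE exchange_big /=; apply: eq_bigr => j _.
by rewrite mxE mulr_suml; apply: eq_bigr => i _; rewrite mxE.
Qed.

Lemma bform_rank1 n (u w v v' : 'cV[R]_n) :
  bform (u *m w^T) v v' = (v^T *m u) 0 0 * (w^T *m v') 0 0.
Proof. by rewrite /bform -!mulmxA (mulmxA v^T) [LHS]mxE big_ord1. Qed.

Lemma bform_deltal n (M : 'M[R]_n) p v :
  bform M v (delta_mx p 0) = (v^T *m col p M) 0 0.
Proof. by rewrite /bform -mulmxA -colE. Qed.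

Lemma bform_delta n (M : 'M[R]_n) (i j : 'I_n) :
  bform M (delta_mx i 0) (delta_mx j 0) = M i j.
Proof. by rewrite /bform -mulmxA -colE trmx_delta -rowE !mxE. Qed.

Lemma psdmx_bform_ge0 n (M : 'M[R]_n) u : psdmx M -> 0 <= bform M u u.
Proof. by case=> _; apply. Qed.

Lemma discr_le (a b c : R) : 0 <= c ->
  (forall l, 0 <= a + 2 * b * l + c * l ^+ 2) -> b ^+ 2 <= a * c.
Proof.
move=> c_ge0 H; have [c_gt0|] := ltrP 0 c.
  have := H (- b / c).
  have -> : a + 2 * b * (- b / c) + c * (- b / c) ^+ 2 = (a * c - b ^+ 2) / c.
    by field; rewrite gt_eqF.
  by rewrite pmulr_lge0 ?invr_gt0 // subr_ge0.
move=> c_le0; have c0 : c = 0 by apply/eqP; rewrite eq_le c_le0 c_ge0.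
subst c; rewrite mulr0; have [->|b_neq0] := eqVneq b 0; first by rewrite expr0n.
have := H (- (a + 1) / (2 * b)).
have -> : a + 2 * b * (- (a + 1) / (2 * b)) + 0 * (- (a + 1) / (2 * b)) ^+ 2 = -1.
  by field.
by rewrite ler0N1.
Qed.

Lemma psdmx_cauchy_schwarz n (M : 'M[R]_n) u v : psdmx M ->
  bform M u v ^+ 2 <= bform M u u * bform M v v.
Proof.
move=> hM; apply: discr_le; first exact: psdmx_bform_ge0.
move=> l; have := psdmx_bform_ge0 (u + l *: v) hM.
rewrite !bformDl !bformDr !bformZl !bformZr (bformC v u hM.1); lra.
Qed.

End BilinearForms.

Section TraceInnerProduct.
Variable R : rcfType.
Implicit Types (n : nat).

Lemma tipC n (P Z : 'M[R]_n) : tip P Z = tip Z P.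
Proof. by apply: eq_bigr => i _; apply: eq_bigr => j _; rewrite mulrC. Qed.

Lemma tipDl n (P Q Z : 'M[R]_n) : tip (P + Q) Z = tip P Z + tip Q Z.
Proof.
rewrite /tip -big_split; apply: eq_bigr => i _; rewrite -big_split.
by apply: eq_bigr => j _; rewrite mxE mulrDl.
Qed.

Lemma tipZl n k (P Z : 'M[R]_n) : tip (k *: P) Z = k * tip P Z.
Proof.
rewrite /tip mulr_sumr; apply: eq_bigr => i _; rewrite mulr_sumr.
by apply: eq_bigr => j _; rewrite mxE mulrA.
Qed.

Lemma tip0l n (Z : 'M[R]_n) : tip 0 Z = 0.
Proof. by rewrite -(scale0r 0) tipZl mul0r. Qed.

Lemma tipDr n (P Q Z : 'M[R]_n) : tip Z (P + Q) = tip Z P + tip Z Q.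
Proof. by rewrite !(tipC Z) tipDl. Qed.

Lemma tipZr n k (P Z : 'M[R]_n) : tip Z (k *: P) = k * tip Z P.
Proof. by rewrite !(tipC Z) tipZl. Qed.

Lemma tipNr n (P Z : 'M[R]_n) : tip Z (- P) = - tip Z P.
Proof. by rewrite -scaleN1r tipZr mulN1r. Qed.

Lemma tip_suml n I (r : seq I) (F : I -> 'M[R]_n) Z :
  tip (\sum_(i <- r) F i) Z = \sum_(i <- r) tip (F i) Z.
Proof.
by apply: (big_morph (fun P => tip P Z)) => [P Q|]; rewrite ?tipDl ?tip0l.
Qed.

Lemma tip_rank1 n (P : 'M[R]_n) u : tip P (u *m u^T) = bform P u u.
Proof.
rewrite bformE; apply: eq_bigr => i _; apply: eq_bigr => j _.
by rewrite mxE big_ord1 !mxE; ring.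
Qed.

End TraceInnerProduct.

Section PsdDecomposition.
Variable R : rcfType.
Implicit Types (n : nat).

Lemma symmx_entry n (M : 'M[R]_n) i j : symmx M -> M j i = M i j.
Proof. by move=> hM; rewrite -{1}hM mxE. Qed.

Lemma psdmx_diag0_row n (Z : 'M[R]_n) p j : psdmx Z -> Z p p = 0 -> Z p j = 0.
Proof.
move=> hZ Zpp0; have := psdmx_cauchy_schwarz (delta_mx p 0) (delta_mx j 0) hZ.
rewrite !bform_delta Zpp0 mul0r => h.
by apply/eqP; rewrite -sqrf_eq0 eq_le h sqr_ge0.
Qed.

(* Symmetric Gaussian elimination at the pivot [p]; row and column [p] of the
   result vanish (deflateE). *)
Lemma psdmx_deflate n (Z : 'M[R]_n) p : psdmx Z -> 0 < Z p p ->
  psdmx (Z - (Z p p)^-1 *: (col p Z *m (col p Z)^T)).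
Proof.
move=> hZ Zpp_gt0; have hZs := hZ.1; split.
  by rewrite /symmx raddfB /= linearZ /= trmx_mul trmxK hZs.
move=> v; rewrite -/(bform _ v v) bformDm -scaleNr bformZm bform_rank1.
rewrite [((col p Z)^T *m v) 0 0]dotmxC -bform_deltal -expr2.
have := psdmx_cauchy_schwarz v (delta_mx p 0) hZ; rewrite bform_delta.
rewrite mulNr subr_ge0 ler_pdivrMl //; lra.
Qed.

Lemma deflateE n (Z : 'M[R]_n) p i j :
  (Z - (Z p p)^-1 *: (col p Z *m (col p Z)^T)) i j
  = Z i j - (Z p p)^-1 * (Z i p * Z j p).
Proof. by rewrite !mxE big_ord1 !mxE. Qed.

Lemma scale_rank1 n (k : R) (u : 'cV[R]_n) : 0 <= k ->
  k *: (u *m u^T) = (Num.sqrt k *: u) *m (Num.sqrt k *: u)^T.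
Proof.
move=> k_ge0; rewrite linearZ /= -scalemxAl -scalemxAr scalerA -expr2.
by rewrite sqr_sqrtr.
Qed.

Lemma psdmx_sum_rank1 n (Z : 'M[R]_n) : psdmx Z ->
  exists us : seq 'cV[R]_n, Z = \sum_(u <- us) u *m u^T.
Proof.
have key m : (m <= n)%N -> forall Y : 'M[R]_n, psdmx Y ->
    (forall i j : 'I_n, (m <= i)%N -> Y i j = 0) ->
    exists us : seq 'cV[R]_n, Y = \sum_(u <- us) u *m u^T.
  elim: m => [_ Y _ Y0|m IH lt_mn Y hY Y0].
    by exists [::]; rewrite big_nil; apply/matrixP => i j; rewrite mxE Y0.
  pose p := Ordinal lt_mn.
  have rows_ge (i : 'I_n) : (m <= i)%N -> i = p \/ (m.+1 <= i)%N.
    rewrite leq_eqVlt => /orP[/eqP mi|]; last by right.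
    by left; apply: val_inj.
  have [Ypp0|Ypp_neq0] := eqVneq (Y p p) 0.
    apply: (IH (ltnW lt_mn) Y hY) => i j /rows_ge[-> | /Y0 //].
    exact: psdmx_diag0_row.
  have Ypp_gt0 : 0 < Y p p.
    by rewrite lt_def Ypp_neq0 -bform_delta psdmx_bform_ge0.
  have [|us defY'] := IH (ltnW lt_mn) _ (psdmx_deflate hY Ypp_gt0).
    move=> i j /rows_ge[->|m1_le_i].
      rewrite deflateE (symmx_entry _ _ hY.1); field; exact: Ypp_neq0.
    by rewrite deflateE !(Y0 i) // mul0r mulr0 subr0.
  exists (Num.sqrt (Y p p)^-1 *: col p Y :: us).
  by rewrite big_cons -scale_rank1 ?invr_ge0 ?ltW // -defY' addrC subrK.
by move=> hZ; apply: (key n (leqnn n) Z hZ) => i j; rewrite leqNgt ltn_ord.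
Qed.

Lemma psdmx_tip_ge0 n (P Z : 'M[R]_n) : psdmx P -> psdmx Z -> 0 <= tip P Z.
Proof.
move=> hP /psdmx_sum_rank1[us ->]; rewrite tipC tip_suml.
by apply: sumr_ge0 => u _; rewrite tipC tip_rank1 psdmx_bform_ge0.
Qed.

End PsdDecomposition.

Section DefinitePerturbation.
Variable R : rcfType.
Implicit Types (n : nat).

Lemma pdmx_psdmx n (M : 'M[R]_n) : pdmx M -> psdmx M.
Proof.
case=> hMs hMp; split=> // v; have [->|v_neq0] := eqVneq v 0.
  by rewrite mulmx0 mxE.
exact/ltW/hMp.
Qed.

Lemma pdmx_unit n (M : 'M[R]_n) : pdmx M -> M \in unitmx.
Proof.
case=> _ hMp; rewrite unitmxE unitfE; apply/negP => /det0P[v v_neq0 vM0].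
by have := hMp v^T; rewrite trmx_eq0 trmxK vM0 mul0mx mxE ltxx => /(_ v_neq0).
Qed.

(* Coercivity: [v_j = <M^-1 e_j, v>_M], so Cauchy-Schwarz for the form of [M]
   bounds each [v_j ^+ 2] by a multiple of [v^T M v]. *)
Lemma pdmx_coercive n (M : 'M[R]_n) : pdmx M ->
  exists2 T : R, 0 <= T &
    forall v : 'cV[R]_n, \sum_k v k 0 ^+ 2 <= T * bform M v v.
Proof.
move=> hM; have hMpsd := pdmx_psdmx hM.
pose u j : 'cV[R]_n := invmx M *m delta_mx j 0.
exists (\sum_j bform M (u j) (u j)).
  by apply: sumr_ge0 => j _; apply: psdmx_bform_ge0.
move=> v; rewrite mulr_suml; apply: ler_sum => j _.
have -> : v j 0 = bform M (u j) v.
  rewrite /bform /u trmx_mul trmx_inv hM.1 -(mulmxA _ (invmx M)).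
  by rewrite mulVmx ?pdmx_unit // mulmx1 trmx_delta -rowE mxE.
exact: psdmx_cauchy_schwarz.
Qed.

Lemma bform_bounded n (B : 'M[R]_n) :
  exists2 K : R, 0 <= K &
    forall v : 'cV[R]_n, `|bform B v v| <= K * \sum_k v k 0 ^+ 2.
Proof.
exists (\sum_i \sum_j `|B i j|).
  by apply: sumr_ge0 => i _; apply: sumr_ge0.
move=> v; set S := \sum_k v k 0 ^+ 2.
have sq_le_S k : `|v k 0| ^+ 2 <= S.
  rewrite real_normK ?num_real // /S (bigD1 k) //= lerDl.
  by apply: sumr_ge0 => l _; rewrite sqr_ge0.
rewrite bformE mulr_suml; apply: le_trans (ler_norm_sum _ _ _) _.
apply: ler_sum => i _; rewrite mulr_suml; apply: le_trans (ler_norm_sum _ _ _) _.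
apply: ler_sum => j _.
have vij : `|v i 0| * `|v j 0| <= S.
  have := sqr_ge0 (`|v i 0| - `|v j 0|); have := sq_le_S i; have := sq_le_S j.
  nra.
by rewrite !normrM mulrAC [X in _ <= X]mulrC ler_wpM2r.
Qed.

Lemma pdmx_perturb n (M B : 'M[R]_n) : pdmx M -> symmx B ->
  exists2 s : R, 0 < s & forall t, `|t| <= s -> psdmx (M + t *: B).
Proof.
move=> hM hB; have [T T_ge0 hT] := pdmx_coercive hM.
have [K K_ge0 hK] := bform_bounded B.
have d_gt0 : 0 < 1 + K * T by rewrite ltr_wpDr // mulr_ge0.
exists (1 + K * T)^-1; first by rewrite invr_gt0.
move=> t ht; split; first by rewrite /symmx raddfD /= linearZ /= hM.1 hB.
move=> v; rewrite -/(bform _ v v) bformDm bformZm.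
have := hT v; have := hK v; have := psdmx_bform_ge0 v (pdmx_psdmx hM).
set S := \sum_k _; set q := bform M v v; set r := bform B v v => q_ge0 hKv hTv.
have t_small : `|t| * (1 + K * T) <= 1 by rewrite -ler_pdivlMr // div1r.
have tr_ge : - (`|t| * (K * S)) <= t * r.
  rewrite lerNl -mulrN; apply: (le_trans (ler_norm _)).
  by rewrite normrM normrN ler_wpM2l.
have := normr_ge0 t; have := normr_ge0 r; nra.
Qed.

End DefinitePerturbation.

Section LiftedMatrix.
Variable R : rcfType.
Implicit Types (n : nat).

Lemma tip_Qmx_Ymx n (A : 'M[R]_n) b c x X :
  tip (Qmx A b c) (Ymx x X) = qf A b c x + tip A (X - x *m x^T).
Proof.
rewrite tipDr tipNr tip_rank1 /qf /tip /Qmx /Ymx big_split_ord.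
under eq_bigr do rewrite big_split_ord.
under [X in _ + X = _]eq_bigr do rewrite big_split_ord.
rewrite !big_ord1 !block_mxEul.
under eq_bigr do rewrite block_mxEur block_mxEur.
under [X in _ + X = _]eq_bigr do rewrite big_ord1 !block_mxEdl.
under [X in _ + X = _]eq_bigr do (under eq_bigr do rewrite !block_mxEdr).
rewrite big_split /= -/(tip A X) /tip -/(bform A x x) !mxE mulr1 /=.
under eq_bigr do rewrite !mxE.
under [X in _ = _ + 2 * X + _ + _]eq_bigr do rewrite !mxE.
ring.
Qed.

Lemma psdmx_Ymx_schur n (x : 'cV[R]_n) X : symmx X -> psdmx (Ymx x X) ->
  psdmx (X - x *m x^T).
Proof.
move=> hX hY; split; first by rewrite /symmx raddfB /= trmx_mul trmxK hX.
move=> v; rewrite -/(bform _ v v) -scaleN1r bformDm bformZm bform_rank1.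
pose e : 'cV[R]_(1 + n) := col_mx 1%:M 0.
pose f : 'cV[R]_(1 + n) := col_mx 0 v.
have Yee : bform (Ymx x X) e e = 1.
  rewrite /bform /Ymx /e tr_col_mx mul_row_block mul_row_col.
  by rewrite !trmx0 !mul0mx !addr0 trmx1 !mulmx1 mulmx0 addr0 mxE.
have Yff : bform (Ymx x X) f f = bform X v v.
  rewrite /bform /Ymx /f tr_col_mx mul_row_block mul_row_col.
  by rewrite !trmx0 !mul0mx !add0r mulmx0 add0r.
have Yef : bform (Ymx x X) e f = (x^T *m v) 0 0.
  rewrite /bform /Ymx /e /f tr_col_mx mul_row_block mul_row_col.
  by rewrite !trmx0 !mul0mx !addr0 trmx1 !mul1mx ?mulmx0 ?add0r.
have := psdmx_cauchy_schwarz e f hY; rewrite Yee Yff Yef mul1r dotmxC; lra.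
Qed.

End LiftedMatrix.

Section QCQP.
Variables (R : rcfType) (N mI mE : nat).
Variables (A0 : 'M[R]_N) (b0 : 'cV[R]_N) (c0 : R).
Variables (A : 'I_(mI + mE) -> 'M[R]_N) (b : 'I_(mI + mE) -> 'cV[R]_N)
          (c : 'I_(mI + mE) -> R).

Implicit Types i : 'I_(mI + mE).

Local Notation q i := (qf (A i) (b i) (c i)).
Local Notation qgam := (qgam A0 b0 c0 A b c).
Local Notation Agam := (Agam A0 A).
Local Notation inGamma := (inGamma A0 A).

Lemma inGamma_qgam_le_SDP g x t : inGamma g -> inDSDP A0 b0 c0 A b c x t ->
  qgam g x <= 2 * t.
Proof.
move=> [hG g_ge0] [X [hXs [hY [hobj hcons]]]].
have lifted : tip (Qmx A0 b0 c0) (Ymx x X)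
    + \sum_i g i * tip (Qmx (A i) (b i) (c i)) (Ymx x X) <= 2 * t.
  rewrite -[2 * t]addr0; apply: lerD => //; apply: sumr_le0 => i _.
  move: (hcons i); case: ifP => [/g_ge0 gi_ge0|_ /eqP ->]; last by rewrite mulr0.
  exact: mulr_ge0_le0.
apply: le_trans lifted; rewrite tip_Qmx_Ymx.
under eq_bigr do rewrite tip_Qmx_Ymx mulrDr.
have := psdmx_tip_ge0 hG (psdmx_Ymx_schur hXs hY).
rewrite /Agam tipDl tip_suml big_split /=.
under eq_bigr do rewrite tipZl.
rewrite /qgam; lra.
Qed.

Definition shift_coord (g : 'I_(mI + mE) -> R) i t k := g k + (k == i)%:R * t.

Lemma sum_shift_coord (V : lmodType R) g i t (F : 'I_(mI + mE) -> V) :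
  \sum_k shift_coord g i t k *: F k = \sum_k g k *: F k + t *: F i.
Proof.
rewrite /shift_coord; under eq_bigr do rewrite scalerDl.
rewrite big_split /=; congr (_ + _).
rewrite (bigD1 i) //= eqxx mul1r big1 ?addr0 // => k /negPf->.
by rewrite mul0r scale0r.
Qed.

Lemma Agam_shift g i t : Agam (shift_coord g i t) = Agam g + t *: A i.
Proof. by rewrite /Agam sum_shift_coord addrA. Qed.

Lemma qgam_shift g i t x : qgam (shift_coord g i t) x = qgam g x + t * q i x.
Proof. by rewrite /qgam (sum_shift_coord (V := R^o)) addrA. Qed.

Section DefiniteMaximizer.
Hypothesis hA : forall i, symmx (A i).
Variables (x : 'cV[R]_N) (g : 'I_(mI + mE) -> R).
Hypotheses (g_max : inF A0 b0 c0 A b c x g) (g_def : pdmx (Agam g)).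

Lemma inF_coord_ge0 i : (i < mI)%N -> 0 <= g i.
Proof. exact: g_max.1.2. Qed.

(* A(g) is positive definite, so moving g a little along any coordinate
   stays in Gamma; maximality of g then forbids any increase of q(., x). *)
Lemma definite_max_stationary i : exists2 s : R, 0 < s &
  forall t, `|t| <= s -> ((i < mI)%N -> 0 <= g i + t) -> t * q i x <= 0.
Proof.
have [s s_gt0 hs] := pdmx_perturb g_def (hA i).
exists s => // t ht hgt.
have shift_in : inGamma (shift_coord g i t).
  split; first by rewrite Agam_shift; exact: hs.
  move=> k k_ineq; rewrite /shift_coord.
  case: eqVneq k_ineq => [->|_] /= k_ineq; first by rewrite mul1r; exact: hgt.
  by rewrite mul0r addr0; exact: inF_coord_ge0.
have := g_max.2 _ shift_in; rewrite qgam_shift; lra.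
Qed.

Lemma definite_max_feasible i : q i x <= 0.
Proof.
have [s s_gt0 hs] := definite_max_stationary i.
rewrite -(pmulr_rle0 _ s_gt0); apply: hs; first by rewrite gtr0_norm.
by move=> /inF_coord_ge0 gi_ge0; rewrite addr_ge0 // ltW.
Qed.

Lemma definite_max_active i : ((i < mI)%N -> 0 < g i) -> q i x = 0.
Proof.
move=> gi_gt0; have [s s_gt0 hs] := definite_max_stationary i.
pose r := if (i < mI)%N then Num.min s (g i) else s.
have r_gt0 : 0 < r.
  by rewrite /r; case: ifP => // /gi_gt0 gi_pos; rewrite lt_min s_gt0.
have r_le_s : r <= s by rewrite /r; case: ifP; rewrite ?ge_min lexx.
apply/le_anti; rewrite definite_max_feasible /= -(pmulr_rge0 _ r_gt0).
rewrite -oppr_le0 -mulNr; apply: hs; first by rewrite normrN gtr0_norm.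
by move=> ineq; rewrite /r ineq subr_ge0 ge_min lexx orbT.
Qed.

Lemma definite_max_qgam : qgam g x = qf A0 b0 c0 x.
Proof.
rewrite /qgam big1 ?addr0 // => i _.
have [->|gi_neq0] := eqVneq (g i) 0; first by rewrite mul0r.
rewrite definite_max_active ?mulr0 // => /inF_coord_ge0 gi_ge0.
by rewrite lt_def gi_neq0.
Qed.

End DefiniteMaximizer.

End QCQP.

Unset Implicit Arguments. Set Strict Implicit.

Theorem mainTheorem3 (R : rcfType) (N mI mE : nat)
  (A0 : 'M[R]_N) (b0 : 'cV[R]_N) (c0 : R)
  (A : 'I_(mI + mE) -> 'M[R]_N) (b : 'I_(mI + mE) -> 'cV[R]_N)
  (c : 'I_(mI + mE) -> R)
  (hN : (1 <= N)%N) (hm : (1 <= mI + mE)%N)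
  (hA0 : symmx A0) (hA : forall i, symmx (A i))
  (hAssA : assumptionA A0 A b c)
  (hAssB : assumptionB A0 b0 c0 A b c)
  (xh : 'cV[R]_N) (th : R)
  (hSDP : inDSDP A0 b0 c0 A b c xh th)
  (hdef : definite_F A0 b0 c0 A b c xh) :
  inD A0 b0 c0 A b c xh th.
Proof.
(* Assumptions A and B only ensure that F(xh) is nonempty; the definite face
   hypothesis already provides a maximizer. *)
case: hdef => g [g_max g_def]; split.
  rewrite -(definite_max_qgam hA g_max g_def).
  exact: (inGamma_qgam_le_SDP g_max.1 hSDP).
move=> i; case: ifP => ineq.
  exact: (definite_max_feasible hA g_max g_def i).
by rewrite (definite_max_active hA g_max g_def) // ineq.
Qed.
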